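(* Let $\Gamma$ be a finite group, $\mathcal{A},\mathcal{A}'$ $\otimes$-categories, $\Gamma$ pseudo-acting on $\mathcal{A}'$, and $f^*:\mathcal{A}\to\mathcal{A}'$ a $\Gamma$-equivariant $\otimes$-functor with right adjoint $f_*$ (unit $\eta$, counit $\epsilon$). Suppose $f^*$ verifies the weak projection formula and is weakly Cartesian, and let $\operatorname{tr}:f_*\mathbf{1}\to\mathbf{1}$ be a weak trace structure. For $A\in\mathcal{A}$ define $\operatorname{tr}_A:f_*f^*A\to A$ as $(1_A\otimes\operatorname{tr})\circ w_A^{-1}$ followed by the unit constraint $A\otimes\mathbf{1}\cong A$. Then $\operatorname{tr}_A$ is natural in $A$ and is a trace structure on $f^*$, i.e. for all $A$: (1) $\operatorname{tr}_A\circ\eta_A=|\Gamma|\cdot1_A$; (2) $f^*(\operatorname{tr}_A)=\Sigma\circ u_{f^*A}$, with $\Sigma:\bigoplus_{g\in\Gamma}f^*A\to f^*A$ the sum map.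
   Context: A $\otimes$-category is an additive symmetric monoidal category with biadditive tensor; $\otimes$-functors are additive and strong symmetric monoidal; $\mathbf{1}$ is the unit, $f^*\mathbf{1}=\mathbf{1}$. Pseudo-action: additive functors $g^*$ with coherent natural isomorphisms $c_{g,h}:h^*g^*\Rightarrow(gh)^*$; equivariance: natural isomorphisms $i_g:g^*f^*\Rightarrow f^*$. $\kappa_C:f^*f_*C\to\bigoplus_g g^*C$ has $g$-component $g^*(\epsilon_C)\circ i_g(f_*C)^{-1}$; for $A\in\mathcal{A}$, $u_{f^*A}=(\bigoplus_g i_g(A))\circ\kappa_{f^*A}:f^*f_*f^*A\to\bigoplus_g f^*A$ (with $\mathbf{1}=f^*\mathbf{1}$ this defines $u_{\mathbf{1}}$). $f^*$ is weakly Cartesian if $\kappa_{\mathbf{1}}$ is an isomorphism. $w_A:A\otimes f_*\mathbf{1}\to f_*f^*A$ is adjoint to $f^*(A\otimes f_*\mathbf{1})\cong f^*A\otimes f^*f_*\mathbf{1}\xrightarrow{1\otimes\epsilon_{\mathbf{1}}}f^*A$; weak projection formula: all $w_A$ are isomorphisms. A weak trace structure is a morphism $\operatorname{tr}:f_*\mathbf{1}\to\mathbf{1}$ with (1u) $\operatorname{tr}\circ\eta_{\mathbf{1}}=|\Gamma|\cdot1_{\mathbf{1}}$ and (2u) $f^*(\operatorname{tr})=\Sigma\circ u_{\mathbf{1}}$, $\Sigma:\bigoplus_g\mathbf{1}\to\mathbf{1}$ the sum map. *)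

From HB Require Import structures.
From mathcomp Require Import all_boot all_order fingroup all_algebra.
Set Implicit Arguments. Unset Strict Implicit. Unset Printing Implicit Defensive.
Import GRing.Theory.
Local Open Scope ring_scope.

Record PreAdd := PreAddMk {
  ob :> Type;
  mor : ob -> ob -> zmodType;
  idm : forall a, mor a a;
  comp : forall a b c, mor b c -> mor a b -> mor a c;
  comp1m : forall a b (f : mor a b), comp (idm b) f = f;
  compm1 : forall a b (f : mor a b), comp f (idm a) = f;
  compA : forall a b c d (h : mor c d) (g : mor b c) (f : mor a b),
      comp h (comp g f) = comp (comp h g) f;
  compDl : forall a b c (g g' : mor b c) (f : mor a b),
      comp (g + g') f = comp g f + comp g' f;
  compDr : forall a b c (g : mor b c) (f f' : mor a b),
      comp g (f + f') = comp g f + comp g f' }.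
Arguments mor {p} a b.
Arguments idm {p} a.
Arguments comp {p a b c}.
Notation "g \oc f" := (comp g f) (at level 50, left associativity).

Definition is_inv (C : PreAdd) (a b : C) (f : mor a b) (g : mor b a) :=
  g \oc f = idm a /\ f \oc g = idm b.

Record biprod (C : PreAdd) (I : finType) (X : I -> C) := BiprodMk {
  bp_ob : C;
  bp_in : forall i, mor (X i) bp_ob;
  bp_pr : forall i, mor bp_ob (X i);
  bp_prin : forall i, bp_pr i \oc bp_in i = idm (X i);
  bp_prin0 : forall i j, i != j -> bp_pr i \oc bp_in j = 0;
  bp_sum : \sum_i (bp_in i \oc bp_pr i) = idm bp_ob }.

Record AddCat := AddCatMk {
  acat :> PreAdd;
  bip : forall (I : finType) (X : I -> acat), biprod X }.

Definition bsum (C : AddCat) (I : finType) (X : I -> C) : C := bp_ob (bip X).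
Definition bin (C : AddCat) (I : finType) (X : I -> C) (i : I) :
  mor (X i) (bsum X) := bp_in (bip X) i.
Definition bpr (C : AddCat) (I : finType) (X : I -> C) (i : I) :
  mor (bsum X) (X i) := bp_pr (bip X) i.

Definition bmap (C : AddCat) (I : finType) (X Y : I -> C)
  (m : forall i, mor (X i) (Y i)) : mor (bsum X) (bsum Y) :=
  \sum_i (bin Y i \oc m i \oc bpr X i).
Definition btup (C : AddCat) (I : finType) (Z : C) (X : I -> C)
  (m : forall i, mor Z (X i)) : mor Z (bsum X) :=
  \sum_i (bin X i \oc m i).
Definition sum_map (C : AddCat) (I : finType) (x : C) :
  mor (bsum (fun _ : I => x)) x :=
  \sum_i bpr (fun _ : I => x) i.

Record SymMon (C : PreAdd) := SymMonMk {
  tens : C -> C -> C;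
  tensm : forall a b a' b', mor a a' -> mor b b' -> mor (tens a b) (tens a' b');
  tunit : C;
  alpha : forall a b c, mor (tens (tens a b) c) (tens a (tens b c));
  alpha_inv : forall a b c, mor (tens a (tens b c)) (tens (tens a b) c);
  lam : forall a, mor (tens tunit a) a;
  lam_inv : forall a, mor a (tens tunit a);
  rho : forall a, mor (tens a tunit) a;
  rho_inv : forall a, mor a (tens a tunit);
  sigma : forall a b, mor (tens a b) (tens b a);
  tensm1 : forall a b, tensm (idm a) (idm b) = idm (tens a b);
  tensmM : forall a b a' b' a'' b'' (f' : mor a' a'') (f : mor a a')
      (g' : mor b' b'') (g : mor b b'),
      tensm (f' \oc f) (g' \oc g) = tensm f' g' \oc tensm f g;
  tensmDl : forall a b a' b' (f f' : mor a a') (g : mor b b'),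
      tensm (f + f') g = tensm f g + tensm f' g;
  tensmDr : forall a b a' b' (f : mor a a') (g g' : mor b b'),
      tensm f (g + g') = tensm f g + tensm f g';
  alphaK : forall a b c, is_inv (alpha a b c) (alpha_inv a b c);
  lamK : forall a, is_inv (lam a) (lam_inv a);
  rhoK : forall a, is_inv (rho a) (rho_inv a);
  alpha_nat : forall a b c a' b' c' (f : mor a a') (g : mor b b') (h : mor c c'),
      alpha a' b' c' \oc tensm (tensm f g) h = tensm f (tensm g h) \oc alpha a b c;
  lam_nat : forall a a' (f : mor a a'),
      lam a' \oc tensm (idm tunit) f = f \oc lam a;
  rho_nat : forall a a' (f : mor a a'),
      rho a' \oc tensm f (idm tunit) = f \oc rho a;
  sigma_nat : forall a b a' b' (f : mor a a') (g : mor b b'),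
      sigma a' b' \oc tensm f g = tensm g f \oc sigma a b;
  pentagon : forall a b c d,
      alpha a b (tens c d) \oc alpha (tens a b) c d
      = tensm (idm a) (alpha b c d) \oc alpha a (tens b c) d
          \oc tensm (alpha a b c) (idm d);
  triangle : forall a b,
      tensm (idm a) (lam b) \oc alpha a tunit b = tensm (rho a) (idm b);
  hexagon : forall a b c,
      alpha b c a \oc sigma a (tens b c) \oc alpha a b c
      = tensm (idm b) (sigma a c) \oc alpha b a c \oc tensm (sigma a b) (idm c);
  sigma_sym : forall a b, sigma b a \oc sigma a b = idm (tens a b) }.

Record TensCat := TensCatMk { tcat :> AddCat; tsm : SymMon tcat }.

Definition tns {C : TensCat} (a b : C) : C := tens (tsm C) a b.
Definition tnsm {C : TensCat} {a b a' b' : C} (f : mor a a') (g : mor b b') :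
  mor (tns a b) (tns a' b') := tensm (tsm C) f g.
Definition tone (C : TensCat) : C := tunit (tsm C).
Definition alphaT {C : TensCat} (a b c : C) := alpha (tsm C) a b c.
Definition lamT {C : TensCat} (a : C) := lam (tsm C) a.
Definition rhoT {C : TensCat} (a : C) := rho (tsm C) a.
Definition sigmaT {C : TensCat} (a b : C) := sigma (tsm C) a b.

Record AFun (C D : PreAdd) := AFunMk {
  fob :> C -> D;
  fmap : forall a b, mor a b -> mor (fob a) (fob b);
  fmap1 : forall a, fmap (idm a) = idm (fob a);
  fmapM : forall a b c (g : mor b c) (f : mor a b),
      fmap (g \oc f) = fmap g \oc fmap f;
  fmapD : forall a b (f g : mor a b), fmap (f + g) = fmap f + fmap g }.
Arguments fmap {C D} _ {a b} _.

Record TensFun (C D : TensCat) := TensFunMk {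
  tfun :> AFun C D;
  tmu : forall a b : C, mor (tns (tfun a) (tfun b)) (tfun (tns a b));
  tmu_inv : forall a b : C, mor (tfun (tns a b)) (tns (tfun a) (tfun b));
  tmu0 : mor (tone D) (tfun (tone C));
  tmu0_inv : mor (tfun (tone C)) (tone D);
  tmuK : forall a b, is_inv (tmu a b) (tmu_inv a b);
  tmu0K : is_inv tmu0 tmu0_inv;
  tmu_nat : forall (a b a' b' : C) (f : mor a a') (g : mor b b'),
      tmu a' b' \oc tnsm (fmap tfun f) (fmap tfun g) = fmap tfun (tnsm f g) \oc tmu a b;
  tmu_alpha : forall a b c : C,
      fmap tfun (alphaT a b c) \oc tmu (tns a b) c \oc tnsm (tmu a b) (idm (tfun c))
      = tmu a (tns b c) \oc tnsm (idm (tfun a)) (tmu b c)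
          \oc alphaT (tfun a) (tfun b) (tfun c);
  tmu_lam : forall a : C,
      fmap tfun (lamT a) \oc tmu (tone C) a \oc tnsm tmu0 (idm (tfun a)) = lamT (tfun a);
  tmu_rho : forall a : C,
      fmap tfun (rhoT a) \oc tmu a (tone C) \oc tnsm (idm (tfun a)) tmu0 = rhoT (tfun a);
  tmu_sigma : forall a b : C,
      fmap tfun (sigmaT a b) \oc tmu a b = tmu b a \oc sigmaT (tfun a) (tfun b) }.
Arguments tmu {C D} t a b.
Arguments tmu_inv {C D} t a b.
Arguments tmu0 {C D} t.
Arguments tmu0_inv {C D} t.

Definition castact (G : Type) (C : TensCat) (F : G -> TensFun C C) (g g' : G)
  (e : g = g') (y x : C) (m : mor y (F g x)) : mor y (F g' x) :=
  eq_rect g (fun k => mor y (F k x)) m g' e.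
Arguments castact {G C} F {g g'} e {y x} m.

Record EqSetup (G : finGroupType) (A A' : TensCat) := EqSetupMk {
  (* f^* and its right adjoint f_*, unit eta, counit eps *)
  pb : TensFun A A';
  pf : AFun A' A;
  ueta : forall a : A, mor a (pf (pb a));
  ceps : forall c : A', mor (pb (pf c)) c;
  ueta_nat : forall (a b : A) (h : mor a b),
      fmap pf (fmap pb h) \oc ueta a = ueta b \oc h;
  ceps_nat : forall (c d : A') (h : mor c d),
      h \oc ceps c = ceps d \oc fmap pb (fmap pf h);
  tri1 : forall a : A, ceps (pb a) \oc fmap pb (ueta a) = idm (pb a);
  tri2 : forall c : A', fmap pf (ceps c) \oc ueta (pf c) = idm (pf c);
  (* pseudo-action of Γ on A': functors g^*, isos c_{g,h} : h^* g^* => (gh)^* *)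
  act : G -> TensFun A' A';
  cc : forall (g h : G) (x : A'), mor (act h (act g x)) (act (g * h)%g x);
  cc_inv : forall (g h : G) (x : A'), mor (act (g * h)%g x) (act h (act g x));
  ccK : forall g h x, is_inv (cc g h x) (cc_inv g h x);
  cc_nat : forall g h (x y : A') (m : mor x y),
      fmap (act (g * h)%g) m \oc cc g h x = cc g h y \oc fmap (act h) (fmap (act g) m);
  cc_coh : forall (g h k : G) (x : A'),
      cc (g * h)%g k x \oc fmap (act k) (cc g h x)
      = castact act (mulgA g h k) (cc g (h * k)%g x \oc cc h k (act g x));
  (* equivariance: isos i_g : g^* f^* => f^* (monoidal natural isos) *)
  ii : forall (g : G) (a : A), mor (act g (pb a)) (pb a);
  ii_inv : forall (g : G) (a : A), mor (pb a) (act g (pb a));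
  iiK : forall g a, is_inv (ii g a) (ii_inv g a);
  ii_nat : forall g (a b : A) (h : mor a b),
      fmap pb h \oc ii g a = ii g b \oc fmap (act g) (fmap pb h);
  ii_mon : forall g (a b : A),
      ii g (tns a b) \oc fmap (act g) (tmu pb a b) \oc tmu (act g) (pb a) (pb b)
      = tmu pb a b \oc tnsm (ii g a) (ii g b);
  ii_mon0 : forall g,
      ii g (tone A) \oc fmap (act g) (tmu0 pb) \oc tmu0 (act g) = tmu0 pb }.

Section Constructions.
Variables (G : finGroupType) (A A' : TensCat) (S : EqSetup G A A').
Local Notation f := (pb S).
Local Notation fs := (pf S).

Definition kappa (c : A') : mor (f (fs c)) (bsum (fun g : G => act S g c)) :=
  @btup A' G (f (fs c)) (fun g : G => act S g c)
    (fun g => fmap (act S g) (ceps S c) \oc ii_inv S g (fs c)).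

Definition u_map (a : A) : mor (f (fs (f a))) (bsum (fun _ : G => f a)) :=
  @bmap A' G (fun g => act S g (f a)) (fun _ => f a) (fun g => ii S g a)
    \oc kappa (f a).

(* u_1, using the identification f^*1 = 1 given by the unit constraint of f^* *)
Definition u_one : mor (f (fs (tone A'))) (bsum (fun _ : G => tone A')) :=
  @bmap A' G (fun _ => f (tone A)) (fun _ => tone A') (fun _ => tmu0_inv f)
    \oc u_map (tone A) \oc fmap f (fmap fs (tmu0 f)).

Definition phi_map (a : A) : mor (f (tns a (fs (tone A')))) (f a) :=
  rhoT (f a) \oc tnsm (idm (f a)) (ceps S (tone A')) \oc tmu_inv f a (fs (tone A')).

Definition w_map (a : A) : mor (tns a (fs (tone A'))) (fs (f a)) :=
  fmap fs (phi_map a) \oc ueta S (tns a (fs (tone A'))).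

(* weak projection formula, with winv the (necessarily unique) inverses *)
Definition weak_projection (winv : forall a : A, mor (fs (f a)) (tns a (fs (tone A')))) :=
  forall a : A, is_inv (w_map a) (winv a).

Definition weakly_cartesian :=
  exists k, is_inv (kappa (tone A')) k.

Definition weak_trace (tr : mor (fs (tone A')) (tone A)) :=
  tr \oc fmap fs (tmu0_inv f) \oc ueta S (tone A) = idm (tone A) *+ #|G|
  /\ tmu0_inv f \oc fmap f tr = @sum_map A' G (tone A') \oc u_one.

Definition trA (winv : forall a : A, mor (fs (f a)) (tns a (fs (tone A'))))
  (tr : mor (fs (tone A')) (tone A)) (a : A) : mor (fs (f a)) a :=
  rhoT a \oc tnsm (idm a) tr \oc winv a.

End Constructions.
Arguments kappa {G A A'} S c.
Arguments u_map {G A A'} S a.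
Arguments u_one {G A A'} S.
Arguments phi_map {G A A'} S a.
Arguments w_map {G A A'} S a.
Arguments weak_projection {G A A'} S winv.
Arguments weakly_cartesian {G A A'} S.
Arguments weak_trace {G A A'} S tr.
Arguments trA {G A A'} S winv tr a.

From Pilot Require Import Defs.
From mathcomp Require Import all_boot all_order fingroup all_algebra.
Set Implicit Arguments. Unset Strict Implicit. Unset Printing Implicit Defensive.
Import GRing.Theory.
Local Open Scope ring_scope.

(** Everything is transported along the projection formula
    [w_A : A ⊗ f_*1 ≅ f_*f^*A], through which [tr_A] is [1_A ⊗ tr].
    Naturality of [tr_A] is naturality of [w].  For (1), the composite
    [w_A ∘ (1_A ⊗ η_1) ∘ ρ_A^-1] is [η_A] (both are adjuncts of [1_{f^*A}]),
    so [tr_A ∘ η_A = 1_A ⊗ (tr ∘ η_1) = |Γ|·1_A].  For (2), it suffices to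
    compare both sides after the isomorphism [f^*(w_A)].  The [g]-component of
    [u_{f^*A} ∘ f^*(w_A)] is [i_g ∘ g^*(φ_A) ∘ i_g^-1], with [φ_A] the adjunct
    of [w_A]; since [i_g] is monoidal this is [1_{f^*A} ⊗ (g-component of u_1)],
    and summing over [g] with (2u) gives [f^*(1_A ⊗ tr)]. *)

Local Notation compmA := Defs.compA.

Section AdditiveMorphism.
Variables (U V : zmodType) (phi : U -> V).
Hypothesis phiD : {morph phi : x y / x + y}.

Lemma addmorph0 : phi 0 = 0.
Proof. by apply: (addrI (phi 0)); rewrite -phiD !addr0. Qed.

Lemma addmorph_sum (I : Type) (r : seq I) (P : pred I) (F : I -> U) :
  phi (\sum_(i <- r | P i) F i) = \sum_(i <- r | P i) phi (F i).
Proof. exact: (big_morph phi phiD addmorph0). Qed.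

Lemma addmorphMn x n : phi (x *+ n) = phi x *+ n.
Proof. by elim: n => [|n IHn]; rewrite ?mulr0n ?addmorph0 // !mulrS phiD IHn. Qed.

End AdditiveMorphism.

Section PreAdditive.
Variable C : PreAdd.
Implicit Types a b c d : C.

Lemma comp0m a b c (f : mor a b) : (0 : mor b c) \oc f = 0.
Proof. by rewrite (addmorph0 (fun g g' => compDl g g' f)). Qed.

Lemma comp_suml a b c (I : finType) (F : I -> mor b c) (f : mor a b) :
  (\sum_i F i) \oc f = \sum_i (F i \oc f).
Proof. by rewrite (addmorph_sum (fun g g' => compDl g g' f)). Qed.

Lemma comp_sumr a b c (I : finType) (F : I -> mor a b) (g : mor b c) :
  g \oc (\sum_i F i) = \sum_i (g \oc F i).
Proof. by rewrite (addmorph_sum (compDr g)). Qed.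

Lemma comp_mulrnl a b c (g : mor b c) (f : mor a b) n :
  (g *+ n) \oc f = (g \oc f) *+ n.
Proof. by rewrite (addmorphMn (fun g g' => compDl g g' f)). Qed.

Lemma comp_mulrnr a b c (g : mor b c) (f : mor a b) n :
  g \oc (f *+ n) = (g \oc f) *+ n.
Proof. by rewrite (addmorphMn (compDr g)). Qed.

Lemma compA_eq a b c d (x : mor b c) (y : mor a b) (w : mor a c) (k : mor d a) :
  x \oc y = w -> x \oc (y \oc k) = w \oc k.
Proof. by move=> <-; rewrite compmA. Qed.

Lemma is_inv_l a b (f : mor a b) g : is_inv f g -> g \oc f = idm a.
Proof. by case. Qed.

Lemma is_inv_r a b (f : mor a b) g : is_inv f g -> f \oc g = idm b.
Proof. by case. Qed.

Lemma is_inv_comp a b c (f : mor a b) f' (g : mor b c) g' :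
  is_inv f f' -> is_inv g g' -> is_inv (g \oc f) (f' \oc g').
Proof.
move=> [f'f ff'] [g'g gg']; split.
  by rewrite -compmA (compA_eq _ g'g) comp1m.
by rewrite -compmA (compA_eq _ ff') comp1m.
Qed.

Lemma is_inv_uniq a b (f : mor a b) g g' : is_inv f g -> is_inv f g' -> g = g'.
Proof. by move=> [gf _] [_ fg']; rewrite -[g]compm1 -fg' compmA gf comp1m. Qed.

Lemma comm_square_inv a b c d (f : mor a b) f' (g : mor c d) g'
    (x : mor a c) (y : mor b d) :
  is_inv f f' -> is_inv g g' -> g \oc x = y \oc f -> x \oc f' = g' \oc y.
Proof.
move=> [_ ff'] [g'g _] gx_yf.
by rewrite -[x \oc f']comp1m -g'g -compmA (compmA g) gx_yf -compmA ff' compm1.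
Qed.

End PreAdditive.

Lemma fmap_is_inv (C D : PreAdd) (F : AFun C D) (a b : C) (f : mor a b) g :
  is_inv f g -> is_inv (fmap F f) (fmap F g).
Proof. by move=> [gf fg]; split; rewrite -fmapM ?gf ?fg fmap1. Qed.

Section Tensor.
Variable C : TensCat.
Implicit Types a b : C.

Lemma tnsm1 a b : tnsm (idm a) (idm b) = idm (tns a b).
Proof. exact: tensm1. Qed.

Lemma tnsmM a b a' b' a'' b'' (f' : mor a' a'') (f : mor a a')
    (g' : mor b' b'') (g : mor b b') :
  tnsm (f' \oc f) (g' \oc g) = tnsm f' g' \oc tnsm f g.
Proof. exact: tensmM. Qed.

Lemma tnsm_sumr a b a' b' (I : finType) (f : mor a a') (F : I -> mor b b') :
  tnsm f (\sum_i F i) = \sum_i tnsm f (F i).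
Proof. by rewrite /tnsm (addmorph_sum (tensmDr _ f)). Qed.

Lemma tnsm_mulrnr a b a' b' (f : mor a a') (g : mor b b') n :
  tnsm f (g *+ n) = tnsm f g *+ n.
Proof. by rewrite /tnsm (addmorphMn (tensmDr _ f)). Qed.

Lemma tnsm_is_inv a b a' b' (f : mor a a') f' (g : mor b b') g' :
  is_inv f f' -> is_inv g g' -> is_inv (tnsm f g) (tnsm f' g').
Proof. by move=> [f'f ff'] [g'g gg']; split; rewrite -tnsmM ?f'f ?ff' ?g'g ?gg' tnsm1. Qed.

Lemma tnsm_factor a b a' b' (f : mor a a') (g : mor b b') :
  tnsm f g = tnsm f (idm b') \oc tnsm (idm a) g.
Proof. by rewrite -tnsmM comp1m compm1. Qed.

Lemma rhoT_nat a a' (f : mor a a') : rhoT a' \oc tnsm f (idm (tone C)) = f \oc rhoT a.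
Proof. exact: rho_nat. Qed.

Lemma rhoTK a : is_inv (rhoT a) (rho_inv (tsm C) a).
Proof. exact: rhoK. Qed.

End Tensor.

Section TensorFunctor.
Variables (C D : TensCat) (F : TensFun C D).

Lemma tmu_inv_nat (a b a' b' : C) (h : mor a a') (k : mor b b') :
  tmu_inv F a' b' \oc fmap F (tnsm h k) = tnsm (fmap F h) (fmap F k) \oc tmu_inv F a b.
Proof. by symmetry; apply: comm_square_inv (tmuK _ _ _) (tmuK _ _ _) (tmu_nat _ _ _). Qed.

Lemma fmap_rhoT (a : C) :
  fmap F (rhoT a) = rhoT (F a) \oc tnsm (idm (F a)) (tmu0_inv F) \oc tmu_inv F a (tone C).
Proof.
rewrite -(tmu_rho F a) -!compmA (compA_eq _ (esym (tnsmM _ _ _ _))) comp1m.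
by rewrite (is_inv_r (tmu0K F)) tnsm1 comp1m (is_inv_r (tmuK F _ _)) compm1.
Qed.

Lemma fmap_rhoT_tnsm (a b : C) (t : mor b (tone C)) :
  fmap F (rhoT a \oc tnsm (idm a) t)
  = rhoT (F a) \oc tnsm (idm (F a)) (tmu0_inv F \oc fmap F t) \oc tmu_inv F a b.
Proof.
rewrite fmapM fmap_rhoT -!compmA tmu_inv_nat fmap1.
by rewrite (compA_eq _ (esym (tnsmM _ _ _ _))) comp1m.
Qed.

End TensorFunctor.

Section Biproducts.
Variables (C : AddCat) (I : finType).

Lemma bpr_btup (X : I -> C) (Z : C) (k : forall i, mor Z (X i)) i :
  bpr X i \oc btup k = k i.
Proof.
rewrite /btup comp_sumr (bigD1 i) //= big1 ?addr0 => [|j ji].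
  by rewrite compmA bp_prin comp1m.
by rewrite compmA bp_prin0 ?comp0m // eq_sym.
Qed.

Lemma bpr_bmap (X Y : I -> C) (m : forall i, mor (X i) (Y i)) i :
  bpr Y i \oc bmap m = m i \oc bpr X i.
Proof.
rewrite /bmap; under eq_bigr do rewrite -compmA.
exact: bpr_btup.
Qed.

Lemma sum_map_bmap_btup (X : I -> C) (x Z : C)
    (m : forall i, mor (X i) x) (k : forall i, mor Z (X i)) :
  sum_map I x \oc (@bmap C I X (fun _ => x) m \oc btup k) = \sum_i (m i \oc k i).
Proof.
rewrite /sum_map comp_suml; apply: eq_bigr => i _.
by rewrite compmA bpr_bmap -compmA bpr_btup.
Qed.

Lemma sum_map_bmap_const (x y : C) (h : mor x y) :
  sum_map I y \oc @bmap C I (fun _ => x) (fun _ => y) (fun _ => h) = h \oc sum_map I x.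
Proof.
rewrite /sum_map comp_suml comp_sumr; apply: eq_bigr => i _.
exact: (@bpr_bmap (fun _ => x) (fun _ => y) (fun _ => h)).
Qed.

End Biproducts.

Section EquivariantAdjunction.
Variables (G : finGroupType) (A A' : TensCat) (S : EqSetup G A A').
Local Notation f := (pb S).
Local Notation fs := (pf S).

Lemma ii_inv_nat g (a b : A) (h : mor a b) :
  fmap (act S g) (fmap f h) \oc ii_inv S g a = ii_inv S g b \oc fmap f h.
Proof. exact: comm_square_inv (iiK _ _ _) (iiK _ _ _) (esym (ii_nat _ _ _)). Qed.

Lemma ii_inv_tmu_inv g (a b : A) :
  tmu_inv (act S g) (f a) (f b) \oc (fmap (act S g) (tmu_inv f a b) \oc ii_inv S g (tns a b))
  = tnsm (ii_inv S g a) (ii_inv S g b) \oc tmu_inv f a b.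
Proof.
apply: (@is_inv_uniq _ _ _ (ii S g (tns a b) \oc fmap (act S g) (tmu f a b)
   \oc tmu (act S g) (f a) (f b))).
  by apply: is_inv_comp (tmuK _ _ _) (is_inv_comp (fmap_is_inv _ (tmuK _ _ _)) (iiK _ _ _)).
by rewrite ii_mon; apply: is_inv_comp (tmuK _ _ _); apply: tnsm_is_inv; apply: iiK.
Qed.

Lemma tmu0_inv_ii g :
  tmu0_inv f \oc (ii S g (tone A) \oc fmap (act S g) (tmu0 f)) = tmu0_inv (act S g).
Proof.
rewrite -[LHS]compm1 -(is_inv_r (tmu0K (act S g))) compmA -(compmA (tmu0_inv f)).
by rewrite ii_mon0 (is_inv_l (tmu0K f)) comp1m.
Qed.

Definition kappa_comp g (c : A') : mor (f (fs c)) (act S g c) :=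
  fmap (act S g) (ceps S c) \oc ii_inv S g (fs c).

Lemma kappa_comp_nat g (c d : A') (m : mor c d) :
  kappa_comp g d \oc fmap f (fmap fs m) = fmap (act S g) m \oc kappa_comp g c.
Proof.
by rewrite /kappa_comp -compmA -ii_inv_nat compmA -fmapM -ceps_nat fmapM -compmA.
Qed.

Lemma kappa_comp_adjunct g (x : A) (c : A') (psi : mor (f x) c) :
  kappa_comp g c \oc fmap f (fmap fs psi \oc ueta S x)
  = fmap (act S g) psi \oc ii_inv S g x.
Proof.
rewrite fmapM compmA kappa_comp_nat -compmA; congr (_ \oc _).
by rewrite /kappa_comp -compmA -ii_inv_nat compmA -fmapM tri1 fmap1 comp1m.
Qed.

Lemma sum_map_u (a : A) :
  sum_map G (f a) \oc u_map S a = \sum_g (ii S g a \oc kappa_comp g (f a)).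
Proof. exact: sum_map_bmap_btup. Qed.

Definition u_one_comp g : mor (f (fs (tone A'))) (tone A') :=
  tmu0_inv f \oc (ii S g (tone A) \oc fmap (act S g) (tmu0 f) \oc kappa_comp g (tone A')).

Lemma sum_map_u_one : sum_map G (tone A') \oc u_one S = \sum_g u_one_comp g.
Proof.
rewrite /u_one !(compmA (sum_map _ _)) sum_map_bmap_const -(compmA (tmu0_inv f)).
rewrite sum_map_u comp_sumr comp_suml; apply: eq_bigr => g _.
by rewrite -compmA -(compmA (ii S g _)) kappa_comp_nat (compmA (ii S g _)).
Qed.

Lemma ii_phi g (a : A) :
  ii S g a \oc fmap (act S g) (phi_map S a) \oc ii_inv S g (tns a (fs (tone A')))
  = rhoT (f a) \oc tnsm (idm (f a)) (u_one_comp g) \oc tmu_inv f a (fs (tone A')).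
Proof.
rewrite /u_one_comp /kappa_comp /phi_map !fmapM fmap_rhoT -!compmA.
rewrite (compA_eq _ (esym (rhoT_nat _))) -!compmA.
rewrite (compA_eq _ (tmu_inv_nat _ _ _)) fmap1 -!compmA ii_inv_tmu_inv.
rewrite !(compA_eq _ (esym (tnsmM _ _ _ _))).
rewrite !comp1m compm1 (is_inv_r (iiK _ _ _)) -(tmu0_inv_ii g).
by rewrite -!compmA.
Qed.

Lemma phi_nat (a b : A) (h : mor a b) :
  phi_map S b \oc fmap f (tnsm h (idm (fs (tone A')))) = fmap f h \oc phi_map S a.
Proof.
rewrite /phi_map -!compmA tmu_inv_nat fmap1 (compA_eq _ (esym (tnsmM _ _ _ _))).
by rewrite comp1m compm1 tnsm_factor !compmA rhoT_nat.
Qed.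

Lemma w_nat (a b : A) (h : mor a b) :
  w_map S b \oc tnsm h (idm (fs (tone A'))) = fmap fs (fmap f h) \oc w_map S a.
Proof. by rewrite /w_map -!compmA -ueta_nat !compmA -!fmapM phi_nat. Qed.

Lemma w_ueta (a : A) :
  w_map S a \oc tnsm (idm a) (fmap fs (tmu0_inv f) \oc ueta S (tone A))
    \oc rho_inv (tsm A) a = ueta S a.
Proof.
rewrite /w_map -!compmA -ueta_nat !compmA -!fmapM.
set X := (X in fmap fs X).
suff -> : X = idm _ by rewrite fmap1 comp1m.
rewrite /X /phi_map -!compmA !fmapM (compA_eq _ (tmu_inv_nat _ _ _)) fmap1.
rewrite -!compmA (compA_eq _ (esym (tnsmM _ _ _ _))) comp1m.
have -> : ceps S (tone A') \oc fmap f (fmap fs (tmu0_inv f) \oc ueta S (tone A))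
    = tmu0_inv f.
  by rewrite fmapM compmA -ceps_nat -compmA tri1 compm1.
by rewrite !compmA -fmap_rhoT -fmapM (is_inv_r (rhoTK _)) fmap1.
Qed.

End EquivariantAdjunction.

Section TraceStructure.
Variables (G : finGroupType) (A A' : TensCat) (S : EqSetup G A A').
Variable winv : forall a : A, mor (pf S (pb S a)) (tns a (pf S (tone A'))).
Variable tr : mor (pf S (tone A')) (tone A).
Hypothesis wp : weak_projection S winv.
Hypothesis wt : weak_trace S tr.
Local Notation f := (pb S).
Local Notation fs := (pf S).

Lemma winv_nat (a b : A) (h : mor a b) :
  winv b \oc fmap fs (fmap f h) = tnsm h (idm (fs (tone A'))) \oc winv a.
Proof. by symmetry; apply: comm_square_inv (wp a) (wp b) (w_nat S h). Qed.

Lemma trA_nat (a b : A) (h : mor a b) :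
  h \oc trA S winv tr a = trA S winv tr b \oc fmap fs (fmap f h).
Proof.
rewrite /trA -!compmA winv_nat (compA_eq _ (esym (tnsmM _ _ _ _))) comp1m compm1.
by rewrite (tnsm_factor h) !compmA rhoT_nat.
Qed.

Lemma trA_ueta (a : A) : trA S winv tr a \oc ueta S a = idm a *+ #|G|.
Proof.
(* [w_A] is abstracted so that reassociating does not unfold it. *)
rewrite /trA -(w_ueta S a); case: (wp a); move: (w_map S a) => w winv_w _.
rewrite -!compmA (compA_eq _ winv_w) comp1m.
rewrite (compA_eq _ (esym (tnsmM _ _ _ _))) comp1m !compmA (proj1 wt).
by rewrite tnsm_mulrnr tnsm1 comp_mulrnr compm1 comp_mulrnl (is_inv_r (rhoTK _)).
Qed.

Lemma fmap_trA (a : A) : fmap f (trA S winv tr a) = sum_map G (f a) \oc u_map S a.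
Proof.
have [_ fw_fwinv] := fmap_is_inv f (wp a).
rewrite /trA fmapM -[RHS]compm1 -fw_fwinv compmA; congr (_ \oc _).
rewrite sum_map_u [in RHS]comp_suml.
rewrite fmap_rhoT_tnsm (proj2 wt) sum_map_u_one tnsm_sumr comp_sumr comp_suml.
apply: eq_bigr => g _.
by rewrite -[in RHS]compmA kappa_comp_adjunct !compmA ii_phi.
Qed.

End TraceStructure.

Theorem proposition3p5 (G : finGroupType) (A A' : TensCat) (S : EqSetup G A A')
  (winv : forall a : A, mor (pf S (pb S a)) (tns a (pf S (tone A'))))
  (tr : mor (pf S (tone A')) (tone A)) :
  weak_projection S winv -> weakly_cartesian S -> weak_trace S tr ->
  (forall (a b : A) (h : mor a b),
      h \oc trA S winv tr a = trA S winv tr b \oc fmap (pf S) (fmap (pb S) h))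
  /\ (forall a : A, trA S winv tr a \oc ueta S a = idm a *+ #|G|)
  /\ (forall a : A, fmap (pb S) (trA S winv tr a) = @sum_map A' G (pb S a) \oc u_map S a).
Proof.
move=> wp _ wt; split; [|split].
- exact: trA_nat.
- exact: trA_ueta.
- exact: fmap_trA.
Qed.
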